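(* Let $\bar U_K^*:=\{x\in\mathcal E^K:\ x\cdot v\ge0\ \text{for all } v\in\bar U_K\}$. Then \[ \bar U_K^*=\Big\{x\in\mathcal E^K:\ \sum_{\ell=k}^K x_\ell\ge0\ \text{for all } k\in\{1,\dots,K\}\Big\}, \] and \[ \bar U_K=\{v\in\mathcal E^K:\ x\cdot v\ge0\ \text{for all } x\in\bar U_K^*\}. \]
   Context: Fix integers $D,K\ge1$. Either $\mathcal C=(0,\infty)^D$, $\bar{\mathcal C}=\mathbb{R}_+^D$, $\mathcal E=\mathbb{R}^D$ with the Euclidean inner product, or $\bar{\mathcal C}=S^D_+$ (positive semidefinite symmetric $D\times D$ matrices), $\mathcal E=S^D$ (symmetric matrices) with $a\cdot b=\mathrm{tr}(a^*b)$. For $x,y\in\mathcal E$, $x\le y$ means $y-x\in\bar{\mathcal C}$ (so ''$\ge0$'' means membership in $\bar{\mathcal C}$). $\bar U_K=\{x=(x_1,\dots,x_K)\in\bar{\mathcal C}^K: x_1\le\dots\le x_K\}$, and on $\mathcal E^K$, $x\cdot y=\sum_{k=1}^K x_k\cdot y_k$. *)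

From HB Require Import structures.
From mathcomp Require Import all_boot all_order all_algebra.
From mathcomp Require Import all_reals.
Set Implicit Arguments. Unset Strict Implicit. Unset Printing Implicit Defensive.
Import Order.TTheory GRing.Theory Num.Theory.
Local Open Scope ring_scope.

(* Generic setting: V is an ambient zmodType containing the space E
   (membership predicate inE), ge0 is membership in the closed cone C-bar,
   dot is the inner product on E. *)

Definition cle (V : zmodType) (ge0 : V -> Prop) (x y : V) : Prop := ge0 (y - x).

Definition dotK (R : pzRingType) (V : Type) (dot : V -> V -> R) (K : nat)
  (x y : 'I_K -> V) : R := \sum_(k < K) dot (x k) (y k).

Definition inEK (V : Type) (inE : V -> Prop) (K : nat) (x : 'I_K -> V) : Prop :=
  forall k, inE (x k).

Definition Ubar (V : zmodType) (ge0 : V -> Prop) (K : nat) (x : 'I_K -> V) : Prop :=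
  (forall k, ge0 (x k)) /\
  (forall (k l : 'I_K), (nat_of_ord l = (nat_of_ord k).+1)%N -> cle ge0 (x k) (x l)).

Definition Ustar (R : numDomainType) (V : zmodType) (inE : V -> Prop)
  (ge0 : V -> Prop) (dot : V -> V -> R) (K : nat) (x : 'I_K -> V) : Prop :=
  inEK inE x /\ (forall v, Ubar ge0 v -> 0 <= dotK dot x v).

Definition lemma3p3_concl (R : numDomainType) (V : zmodType) (inE : V -> Prop)
  (ge0 : V -> Prop) (dot : V -> V -> R) (K : nat) : Prop :=
  (forall x : 'I_K -> V,
     Ustar inE ge0 dot x <->
     (inEK inE x /\ forall k : 'I_K, ge0 (\sum_(l < K | (k <= l)%N) x l))) /\
  (forall v : 'I_K -> V,
     Ubar ge0 v <->
     (inEK inE v /\ forall x, Ustar inE ge0 dot x -> 0 <= dotK dot x v)).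

(* Case 1: E = R^D (row vectors), C-bar = R_+^D, Euclidean inner product. *)
Definition orth_inE (R : realType) (D : nat) (v : 'rV[R]_D) : Prop := True.
Definition orth_ge0 (R : realType) (D : nat) (v : 'rV[R]_D) : Prop :=
  forall i, 0 <= v 0 i.
Definition orth_dot (R : realType) (D : nat) (u v : 'rV[R]_D) : R :=
  \sum_(i < D) u 0 i * v 0 i.

(* Case 2: E = S^D symmetric matrices, C-bar = S^D_+ (PSD), a.b = tr(a^* b). *)
Definition sym_inE (R : realType) (D : nat) (A : 'M[R]_D) : Prop := A^T = A.
Definition psd (R : realType) (D : nat) (A : 'M[R]_D) : Prop :=
  A^T = A /\ forall v : 'cV[R]_D, 0 <= (v^T *m A *m v) 0 0.
Definition sym_dot (R : realType) (D : nat) (A B : 'M[R]_D) : R :=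
  \tr (A^T *m B).

From HB Require Import structures.
From mathcomp Require Import all_boot all_order all_algebra.
From mathcomp Require Import all_reals.
From mathcomp Require Import ring.
Set Implicit Arguments. Unset Strict Implicit. Unset Printing Implicit Defensive.
Import Order.TTheory GRing.Theory Num.Theory.
Local Open Scope ring_scope.

(** Both cones are self-dual in E: R_+^D trivially, and S^D_+ by Fejer's
    inequality tr(AB) >= 0, obtained by peeling rank-one terms c c^T off a PSD
    matrix with Schur complements. For a self-dual cone, Abel summation gives
    x.v = sum_k (sum_(l >= k) x_l).(v_k - v_(k-1)) with v_0 := 0, whence the
    description of U_K^*; conversely the vectors c e_k and c (e_(k+1) - e_k)
    with c >= 0 lie in U_K^*, and testing v against them recovers U_K. *)

Record selfdual_cone (R : numDomainType) (V : zmodType) (inE ge0 : V -> Prop)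
    (dot : V -> V -> R) : Prop := SelfDualCone {
  inE0 : inE 0;
  inEB : forall x y, inE x -> inE y -> inE (x - y);
  ge0_inE : forall x, ge0 x -> inE x;
  dotBl : forall x y z, dot (x - y) z = dot x z - dot y z;
  dotC : forall x y, dot x y = dot y x;
  ge0_dualP : forall x, inE x -> (ge0 x <-> forall c, ge0 c -> 0 <= dot x c) }.

Definition tail_sum (V : zmodType) K (x : 'I_K -> V) (k : 'I_K) : V :=
  \sum_(l < K | (k <= l)%N) x l.

Definition tail_vec (V : zmodType) K (k : 'I_K) (c : V) (l : 'I_K) : V :=
  if (k <= l)%N then c else 0.

Definition unit_vec (V : zmodType) K (l : 'I_K) (c : V) (j : 'I_K) : V :=
  if j == l then c else 0.

Definition ord_prev K (j : 'I_K) : 'I_K :=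
  Ordinal (leq_ltn_trans (leq_pred j) (ltn_ord j)).

Definition increment (V : zmodType) K (v : 'I_K -> V) (j : 'I_K) : V :=
  if val j == 0%N then v j else v j - v (ord_prev j).

Lemma tail_sum_unit_vec (V : zmodType) K (l k : 'I_K) (c : V) :
  tail_sum (unit_vec l c) k = tail_vec k c l.
Proof.
rewrite /tail_sum big_mkcond (bigD1 l) //= /unit_vec eqxx big1 ?addr0 //.
by move=> j /negbTE ->; case: ifP.
Qed.

Lemma sum_increment (V : zmodType) K (v : 'I_K -> V) (k : 'I_K) :
  \sum_(j < K | (j <= k)%N) increment v j = v k.
Proof.
move: {2}(val k) (erefl (val k)) => n; elim: n k => [|n IHn] k kE.
  rewrite (big_pred1 k) /increment ?kE // => j /=.
  by rewrite -(inj_eq val_inj) kE leqn0.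
have prevE : val (ord_prev k) = n by rewrite /= kE.
rewrite (bigD1 k) //= (eq_bigl (fun j : 'I_K => (j <= ord_prev k)%N)).
  by rewrite IHn // /increment kE subrK.
by move=> j; rewrite prevE kE andbC -(inj_eq val_inj) /= kE -ltn_neqAle.
Qed.

Section SelfDualCone.

Variables (R : numDomainType) (V : zmodType) (inE ge0 : V -> Prop).
Variable dot : V -> V -> R.
Hypothesis cone : selfdual_cone inE ge0 dot.

Lemma dot0l z : dot 0 z = 0.
Proof. by have := dotBl cone 0 0 z; rewrite !subrr. Qed.

Lemma dotNl y z : dot (- y) z = - dot y z.
Proof. by have := dotBl cone 0 y z; rewrite !sub0r dot0l sub0r. Qed.

Lemma dotDl x y z : dot (x + y) z = dot x z + dot y z.
Proof. by have := dotBl cone x (- y) z; rewrite opprK dotNl opprK. Qed.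

Lemma dot0r z : dot z 0 = 0.
Proof. by rewrite (dotC cone) dot0l. Qed.

Lemma dotDr x y z : dot z (x + y) = dot z x + dot z y.
Proof. by rewrite !(dotC cone z) dotDl. Qed.

Lemma dot_suml z (I : finType) (P : pred I) (F : I -> V) :
  dot (\sum_(i | P i) F i) z = \sum_(i | P i) dot (F i) z.
Proof. exact: (big_morph (dot^~ z) (fun x y => dotDl x y z) (dot0l z)). Qed.

Lemma dot_sumr z (I : finType) (P : pred I) (F : I -> V) :
  dot z (\sum_(i | P i) F i) = \sum_(i | P i) dot z (F i).
Proof. exact: (big_morph (dot z) (fun x y => dotDr x y z) (dot0r z)). Qed.

Lemma inED x y : inE x -> inE y -> inE (x + y).
Proof.
move=> Ex Ey; have ENy : inE (- y) by rewrite -sub0r; apply: (inEB cone (inE0 cone)).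
by rewrite -[y]opprK; apply: (inEB cone).
Qed.

Lemma inE_sum (I : finType) (P : pred I) (F : I -> V) :
  (forall i, inE (F i)) -> inE (\sum_(i | P i) F i).
Proof. by move=> EF; apply: (big_ind inE) => //; [exact: (inE0 cone) | exact: inED]. Qed.

Lemma ge0_0 : ge0 0.
Proof. by apply/(ge0_dualP cone (inE0 cone)) => c _; rewrite dot0l. Qed.

Variable K : nat.

Lemma Ubar_tail_vec (k : 'I_K) c : ge0 c -> Ubar ge0 (tail_vec k c).
Proof.
move=> c_ge0; split=> [l | l l' l'E].
  by rewrite /tail_vec; case: ifP => // _; exact: ge0_0.
rewrite /cle /tail_vec l'E; case: (leqP k l) => [kl | lk].
  by rewrite ltnW ?ltnS // subrr; exact: ge0_0.
by case: ifP => _; rewrite ?subr0 ?subrr //; exact: ge0_0.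
Qed.

Lemma dotK_tail_vec (x : 'I_K -> V) k c :
  dotK dot x (tail_vec k c) = dot (tail_sum x k) c.
Proof.
rewrite /dotK /tail_sum dot_suml [RHS]big_mkcond /=.
by apply: eq_bigr => l _; rewrite /tail_vec; case: ifP; rewrite ?dot0r.
Qed.

Lemma dotK_unit_vec (v : 'I_K -> V) l c : dotK dot (unit_vec l c) v = dot c (v l).
Proof.
rewrite /dotK (bigD1 l) //= /unit_vec eqxx big1 ?addr0 //.
by move=> j /negbTE ->; rewrite dot0l.
Qed.

Lemma dotKBl (x y v : 'I_K -> V) :
  dotK dot (fun j => x j - y j) v = dotK dot x v - dotK dot y v.
Proof. by rewrite /dotK -sumrB; apply: eq_bigr => j _; rewrite (dotBl cone). Qed.

Lemma dotK_abel (x v : 'I_K -> V) :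
  dotK dot x v = \sum_(j < K) dot (tail_sum x j) (increment v j).
Proof.
rewrite /dotK (eq_bigr (fun k : 'I_K => \sum_(j < K | (j <= k)%N) dot (x k) (increment v j))).
  rewrite (exchange_big_dep xpredT) //=; apply: eq_bigr => j _.
  by rewrite /tail_sum dot_suml.
by move=> k _; rewrite -dot_sumr sum_increment.
Qed.

Lemma Ubar_increment_ge0 (v : 'I_K -> V) j : Ubar ge0 v -> ge0 (increment v j).
Proof.
case=> v_ge0 v_mono; rewrite /increment; case: eqP => [_ | j_neq0]; first exact: v_ge0.
by apply: v_mono; rewrite /= prednK // lt0n; apply/eqP.
Qed.

Lemma Ustar_tail_sumP (x : 'I_K -> V) :
  Ustar inE ge0 dot x <-> inEK inE x /\ forall k, ge0 (tail_sum x k).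
Proof.
have E_tail k : inEK inE x -> inE (tail_sum x k) by move=> Ex; exact: inE_sum.
split=> [[Ex x_dual] | [Ex tail_ge0]]; split=> //.
  move=> k; apply/(ge0_dualP cone (E_tail k Ex)) => c c_ge0.
  by rewrite -dotK_tail_vec; apply/x_dual/Ubar_tail_vec.
move=> v Uv; rewrite dotK_abel; apply: sumr_ge0 => j _.
exact: (ge0_dualP cone (E_tail j Ex)).1 (tail_ge0 j) _ (Ubar_increment_ge0 j Uv).
Qed.

Lemma Ustar_unit_vec (l : 'I_K) c : ge0 c -> Ustar inE ge0 dot (unit_vec l c).
Proof.
move=> c_ge0; apply/Ustar_tail_sumP; split=> [j | k].
  by rewrite /unit_vec; case: eqP => _; [exact: (ge0_inE cone) | exact: (inE0 cone)].
by rewrite tail_sum_unit_vec; case: (Ubar_tail_vec k c_ge0).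
Qed.

Lemma Ustar_unit_vecB (k l : 'I_K) c : val l = (val k).+1 -> ge0 c ->
  Ustar inE ge0 dot (fun j => unit_vec l c j - unit_vec k c j).
Proof.
move=> lE c_ge0; apply/Ustar_tail_sumP; split=> [j | j].
  by apply: (inEB cone); rewrite /unit_vec; case: eqP => _;
    by [exact: (ge0_inE cone) | exact: (inE0 cone)].
rewrite /tail_sum sumrB -!/(tail_sum _ _) !tail_sum_unit_vec.
by case: (Ubar_tail_vec j c_ge0) => _; apply.
Qed.

Lemma Ubar_dualP (v : 'I_K -> V) :
  Ubar ge0 v <-> inEK inE v /\ forall x, Ustar inE ge0 dot x -> 0 <= dotK dot x v.
Proof.
split=> [Uv | [Ev v_dual]].
  split=> [k | x [_ x_dual]]; [exact: (ge0_inE cone) (Uv.1 k) | exact: x_dual].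
split=> [k | k l lE].
  apply/(ge0_dualP cone (Ev k)) => c c_ge0.
  by rewrite (dotC cone) -dotK_unit_vec; apply/v_dual/Ustar_unit_vec.
apply/(ge0_dualP cone (inEB cone (Ev l) (Ev k))) => c c_ge0.
have := v_dual _ (Ustar_unit_vecB lE c_ge0).
by rewrite dotKBl !dotK_unit_vec !(dotC cone c) -(dotBl cone).
Qed.

End SelfDualCone.

Lemma lemma3p3_concl_selfdual (R : numDomainType) (V : zmodType) (inE ge0 : V -> Prop)
    (dot : V -> V -> R) K :
  selfdual_cone inE ge0 dot -> lemma3p3_concl inE ge0 dot K.
Proof. by move=> cone; split=> [x | v]; [exact: Ustar_tail_sumP | exact: Ubar_dualP]. Qed.

Lemma quad_ge0_lin0 (R : numFieldType) (a b : R) :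
  (forall t, 0 <= a + 2 * t * b) -> b = 0.
Proof.
move=> quad_ge0; apply/eqP/negPn/negP => b_neq0.
have := quad_ge0 (- (a + 1) / (2 * b)).
have -> : a + 2 * (- (a + 1) / (2 * b)) * b = -1 by field.
by rewrite oppr_ge0 ler10.
Qed.

Lemma quad_ge0_discr (R : numFieldType) (a b c : R) :
  (forall t, 0 <= a + 2 * t * b + t ^+ 2 * c) -> 0 < c -> b ^+ 2 / c <= a.
Proof.
move=> quad_ge0 c_gt0; have := quad_ge0 (- b / c).
have -> : a + 2 * (- b / c) * b + (- b / c) ^+ 2 * c = a - b ^+ 2 / c.
  by field; rewrite gt_eqF.
by rewrite subr_ge0.
Qed.

Definition bilin (R : comPzRingType) D (B : 'M[R]_D) (u w : 'cV[R]_D) : R :=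
  (u^T *m B *m w) 0 0.

Section Bilinear.

Variables (R : comPzRingType) (D : nat).
Implicit Types (B M : 'M[R]_D) (c u w : 'cV[R]_D).

Lemma mx11_trmx m (A : 'M[R]_(1, m)) (C : 'M[R]_(m, 1)) : (A *m C) 0 0 = (C^T *m A^T) 0 0.
Proof. by rewrite -trmx_mul [RHS]mxE. Qed.

Lemma bilinC B u w : B^T = B -> bilin B u w = bilin B w u.
Proof. by move=> B_sym; rewrite /bilin mx11_trmx trmx_mul trmxK B_sym mulmxA. Qed.

Lemma bilin_addZ B u w t : B^T = B ->
  bilin B (u + t *: w) (u + t *: w) = bilin B u u + 2 * t * bilin B u w + t ^+ 2 * bilin B w w.
Proof.
move=> B_sym; have := bilinC u w B_sym; rewrite /bilin.
rewrite [(u + _)^T]linearD /= [(t *: w)^T]linearZ /= !mulmxDl !mulmxDr -!scalemxAl -!scalemxAr.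
set uu := u^T *m B *m u; set uw := u^T *m B *m w; set wu := w^T *m B *m u.
set ww := w^T *m B *m w.
by rewrite !mxE => ->; ring.
Qed.

Lemma bilin_delta B i j : bilin B (delta_mx i 0) (delta_mx j 0) = B i j.
Proof. by rewrite /bilin -colE trmx_delta -rowE !mxE. Qed.

Lemma bilin_delta_r B u i : bilin B u (delta_mx i 0) = (u^T *m col i B) 0 0.
Proof. by rewrite /bilin colE mulmxA. Qed.

Lemma bilin_rank1 c u : bilin (c *m c^T) u u = (u^T *m c) 0 0 ^+ 2.
Proof.
rewrite /bilin mulmxA -(mulmxA (u^T *m c)) [in LHS]mxE big_ord1.
by rewrite (mx11_trmx c^T) trmxK expr2.
Qed.

Lemma mxtrace_mul_rank1 M c : \tr (M *m (c *m c^T)) = bilin M c c.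
Proof. by rewrite mulmxA mxtrace_mulC /bilin mulmxA /mxtrace big_ord1. Qed.

End Bilinear.

Section Psd.

Variables (R : realType) (D : nat).
Implicit Types (A B : 'M[R]_D) (c u w : 'cV[R]_D).

Lemma psd_quad_ge0 B u w t : psd B ->
  0 <= bilin B u u + 2 * t * bilin B u w + t ^+ 2 * bilin B w w.
Proof. by case=> B_sym B_ge0; rewrite -bilin_addZ //; apply: B_ge0. Qed.

Lemma psd_diag_ge0 B i : psd B -> 0 <= B i i.
Proof. by case=> _ B_ge0; rewrite -bilin_delta; apply: B_ge0. Qed.

Lemma psd_col_eq0 B i j : psd B -> B i i = 0 -> B j i = 0.
Proof.
move=> B_psd Bii0; apply: (@quad_ge0_lin0 _ (B j j)) => t.
have := psd_quad_ge0 (delta_mx j 0) (delta_mx i 0) t B_psd.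
by rewrite !bilin_delta Bii0 mulr0 addr0.
Qed.

Lemma psd_row_eq0 B i j : psd B -> B i i = 0 -> B i j = 0.
Proof.
move=> B_psd /(psd_col_eq0 j B_psd); have [B_sym _] := B_psd.
by rewrite -[in X in X = 0 -> _]B_sym mxE.
Qed.

Lemma psd_rank1 c : psd (c *m c^T).
Proof.
split=> [|u]; first by rewrite trmx_mul trmxK.
by rewrite -/(bilin _ _ _) bilin_rank1 sqr_ge0.
Qed.

Definition schur B i : 'M[R]_D := B - (B i i)^-1 *: (col i B *m (col i B)^T).

Lemma schur_psd B i : psd B -> 0 < B i i -> psd (schur B i).
Proof.
move=> B_psd Bii_gt0; have [B_sym _] := B_psd; split.
  by rewrite /schur linearB /= linearZ /= trmx_mul trmxK B_sym.
move=> u; rewrite -/(bilin _ _ _).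
have := quad_ge0_discr (psd_quad_ge0 u (delta_mx i 0) ^~ B_psd).
rewrite bilin_delta => /(_ Bii_gt0).
have -> : bilin (schur B i) u u =
    bilin B u u - (B i i)^-1 * bilin (col i B *m (col i B)^T) u u.
  by rewrite /bilin /schur mulmxBr mulmxBl -scalemxAr -scalemxAl !mxE.
by rewrite bilin_rank1 -bilin_delta_r subr_ge0 mulrC.
Qed.

Lemma schur_diag_support B i : psd B -> 0 < B i i ->
  [set j | schur B i j j != 0] \subset [set j | B j j != 0] :\ i.
Proof.
move=> B_psd Bii_gt0; apply/subsetP => j; rewrite !inE /schur !mxE big_ord1 !mxE.
have [-> | j_neq_i] := eqVneq j i.
  by rewrite mulrA mulVf ?mul1r ?subrr ?eqxx // gt_eqF.
have [Bjj0 | //] := eqVneq (B j j) 0.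
by rewrite (psd_row_eq0 i B_psd Bjj0) !mulr0 subr0 Bjj0 eqxx.
Qed.

(* Removing the Schur rank-one term at a nonzero diagonal entry shrinks the
   support of the diagonal, so the induction is on the size of that support. *)
Lemma psd_rank1_ind (P : 'M[R]_D -> Prop) :
  P 0 -> (forall B a c, 0 <= a -> P B -> P (B + a *: (c *m c^T))) ->
  forall B, psd B -> P B.
Proof.
move=> P0 P_step B; move: {2}#|_| (leqnn #|[set j | B j j != 0]|) => n.
elim: n B => [|n IHn] B supp_le B_psd.
  have -> : B = 0; last exact: P0.
  apply/matrixP => j i; rewrite mxE; apply: (psd_col_eq0 j B_psd).
  apply/eqP; move: supp_le; rewrite leqn0 cards_eq0 => /eqP/setP/(_ i).
  by rewrite !inE => /negbFE.
have [supp0 | [i]] := set_0Vmem [set j | B j j != 0].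
  by apply: (IHn B) => //; rewrite supp0 cards0.
rewrite inE => Bii_neq0; have Bii_gt0 : 0 < B i i by rewrite lt_def Bii_neq0 psd_diag_ge0.
rewrite -(subrK ((B i i)^-1 *: (col i B *m (col i B)^T)) B) -/(schur B i).
apply: P_step; first by rewrite invr_ge0 ltW.
apply: IHn (schur_psd B_psd Bii_gt0).
have supp_lt : (#|[set j | schur B i j j != 0%R]| < #|[set j | B j j != 0%R]|)%N.
  apply: leq_ltn_trans (subset_leq_card (schur_diag_support B_psd Bii_gt0)) _.
  by rewrite [X in (_ < X)%N](cardsD1 i) inE Bii_neq0.
by rewrite -ltnS (leq_trans supp_lt).
Qed.

Lemma psd_mxtrace_mul_ge0 A B : psd A -> psd B -> 0 <= \tr (A^T *m B).
Proof.
move=> [A_sym A_ge0]; move: B; apply: psd_rank1_ind => [|B' a c a_ge0 trB'_ge0].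
  by rewrite mulmx0 mxtrace0.
rewrite mulmxDr mxtraceD addr_ge0 // -scalemxAr mxtraceZ mxtrace_mul_rank1 A_sym.
exact: mulr_ge0 a_ge0 (A_ge0 c).
Qed.

End Psd.

Lemma orth_dot_delta (R : realType) D (x : 'rV[R]_D) i : orth_dot x (delta_mx 0 i) = x 0 i.
Proof.
rewrite /orth_dot (bigD1 i) //= big1 ?addr0 => [|j j_neq_i]; first by rewrite mxE !eqxx mulr1.
by rewrite mxE (negbTE j_neq_i) andbF mulr0.
Qed.

Lemma orth_selfdual (R : realType) D :
  selfdual_cone (@orth_inE R D) (@orth_ge0 R D) (@orth_dot R D).
Proof.
split=> // [x y z | x y | x _].
- by rewrite /orth_dot -sumrB; apply: eq_bigr => i _; rewrite !mxE mulrBl.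
- by apply: eq_bigr => i _; rewrite mulrC.
split=> [x_ge0 c c_ge0 | x_dual i]; first by apply: sumr_ge0 => i _; apply: mulr_ge0.
rewrite -orth_dot_delta; apply: x_dual => j; rewrite mxE.
by case: (_ && _).
Qed.

Lemma sym_selfdual (R : realType) D :
  selfdual_cone (@sym_inE R D) (@psd R D) (@sym_dot R D).
Proof.
split=> [| x y x_sym y_sym | x [] // | x y z | x y | x x_sym].
- exact: trmx0.
- by rewrite /sym_inE linearB /= x_sym y_sym.
- by rewrite /sym_dot linearB /= mulmxBl linearB.
- by rewrite /sym_dot -mxtrace_tr trmx_mul trmxK.
split=> [x_psd c c_psd | x_dual]; first exact: psd_mxtrace_mul_ge0.
split=> // v; have := x_dual _ (psd_rank1 v).
by rewrite /sym_dot x_sym mxtrace_mul_rank1.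
Qed.

Theorem lemma3p3 (R : realType) (D K : nat) (hD : (1 <= D)%N) (hK : (1 <= K)%N) :
  lemma3p3_concl (@orth_inE R D) (@orth_ge0 R D) (@orth_dot R D) K /\
  lemma3p3_concl (@sym_inE R D) (@psd R D) (@sym_dot R D) K.
Proof. by split; apply: lemma3p3_concl_selfdual; [exact: orth_selfdual | exact: sym_selfdual]. Qed.
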